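(* In the two-SP bandwidth game with minimum small-cell bandwidth constraints, suppose exactly SP 2's constraint is violated by the unconstrained equilibrium, i.e. $B_{1,S}^{\mathrm{free}}\ge B_{1,S}^0$ and $B_{2,S}^{\mathrm{free}}<B_{2,S}^0$. Then the unique constrained Nash equilibrium $(B_{1,S}^*,B_{2,S}^* )$ satisfies $B_{2,S}^*=B_{2,S}^0$; that is, it is of one of the two types: (I) $B_{1,S}^*=B_{1,S}^0,\ B_{2,S}^*=B_{2,S}^0$; or (II) $B_{1,S}^*>B_{1,S}^0,\ B_{2,S}^*=B_{2,S}^0$. In particular, an equilibrium with $B_{1,S}^*=B_{1,S}^0$ and $B_{2,S}^*>B_{2,S}^0$ is impossible.
   Context: Fixed parameters: $\alpha\in(0,1)$; densities $N_m>0$ (mobile users) and $N_f>0$ (fixed users); spectral efficiency $R_0>0$; common small-cell density $\lambda_S>1$ (macro density normalized to 1); total bandwidths $B_1,B_2>0$; regulatory lower bounds $B_{i,S}^0\in[0,B_i]$. Utility $u(r)=\frac{r^{1-\alpha}}{1-\alpha}$, $u'(r)=r^{-\alpha}$. Let $\epsilon=\lambda_S^{1/\alpha-1}$. Two-SP bandwidth game: SP $i\in\{1,2\}$ chooses small-cell bandwidth $B_{i,S}\in[B_{i,S}^0,B_i]$ and sets $B_{i,M}=B_i-B_{i,S}$. Given a profile, prices are market-clearing, mobile users use macro-cells and fixed users use small-cells, so the average rates are $R_S=\frac{\lambda_S(B_{1,S}+B_{2,S})R_0}{N_f}$ and $R_M=\frac{(B_{1,M}+B_{2,M})R_0}{N_m}$,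 and SP $i$'s payoff (revenue) is $S_i=R_0B_{i,M}R_M^{-\alpha}+R_0\lambda_SB_{i,S}R_S^{-\alpha}$ (a term with zero bandwidth is $0$). This game has a unique pure Nash equilibrium. Define $B_{i,S}^{\mathrm{free}}=\frac{\epsilon N_fB_i}{\epsilon N_f+N_m}$, the equilibrium small-cell bandwidth of SP $i$ when there are no constraints ($B_{i,S}^0=0$). *)

From Stdlib Require Import Reals Lra.
Open Scope R_scope.

(* u'(r) = r^(-alpha); a revenue term R0 * B * (lambda) * r^(-alpha),
   which is 0 when the bandwidth B is 0 (B <= 0 never occurs otherwise). *)
Definition rev_term (alpha R0 lam B r : R) : R :=
  if Rle_dec B 0 then 0 else R0 * lam * B * Rpower r (- alpha).

Definition rate_S (Nf R0 lamS b1 b2 : R) : R := lamS * (b1 + b2) * R0 / Nf.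
Definition rate_M (Nm R0 B1 B2 b1 b2 : R) : R := ((B1 - b1) + (B2 - b2)) * R0 / Nm.

Definition payoff (alpha Nm Nf R0 lamS B1 B2 Bi bi b1 b2 : R) : R :=
  rev_term alpha R0 1 (Bi - bi) (rate_M Nm R0 B1 B2 b1 b2)
  + rev_term alpha R0 lamS bi (rate_S Nf R0 lamS b1 b2).

Definition S1 alpha Nm Nf R0 lamS B1 B2 b1 b2 :=
  payoff alpha Nm Nf R0 lamS B1 B2 B1 b1 b1 b2.
Definition S2 alpha Nm Nf R0 lamS B1 B2 b1 b2 :=
  payoff alpha Nm Nf R0 lamS B1 B2 B2 b2 b1 b2.

Definition is_NE alpha Nm Nf R0 lamS B1 B2 B10 B20 (b1 b2 : R) : Prop :=
  B10 <= b1 <= B1 /\ B20 <= b2 <= B2 /\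
  (forall x, B10 <= x <= B1 ->
     S1 alpha Nm Nf R0 lamS B1 B2 x b2 <= S1 alpha Nm Nf R0 lamS B1 B2 b1 b2) /\
  (forall x, B20 <= x <= B2 ->
     S2 alpha Nm Nf R0 lamS B1 B2 b1 x <= S2 alpha Nm Nf R0 lamS B1 B2 b1 b2).

Definition eps_of (alpha lamS : R) : R := Rpower lamS (1 / alpha - 1).

Definition B_free (alpha Nm Nf lamS Bi : R) : R :=
  eps_of alpha lamS * Nf * Bi / (eps_of alpha lamS * Nf + Nm).

From Stdlib Require Import Reals Lra.
From Coquelicot Require Import Coquelicot.
Open Scope R_scope.

(* Write X = b1 + b2 and Y = B1 + B2 - X for the aggregate small-cell and macro
   bandwidths and q, p for the corresponding unit prices.  The marginal revenue of
   SP i has the sign of (q - p)(X - alpha b_i) Y + p alpha (B_i X - b_i (X + Y)),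
   and q < p as soon as the aggregate share X / (X + Y) exceeds the free share
   eps N_f / (eps N_f + N_m).  Suppose SP 2 sits strictly above its floor, so its
   marginal revenue is nonnegative.  If q > p, the share b2 / B2 exceeds the free
   share, which is at least the aggregate share, so b1 / B1 lies below it and SP 1
   would gain by moving bandwidth to small cells.  If q <= p, SP 2's condition
   forces b2 / B2 <= X / (X + Y); hence q < p and SP 1 is strictly above its floor,
   and the sum of the two marginal revenues, (q - p)(2 - alpha) X Y, is negative.
   When Y = 0 the macro price is unbounded, so SP 2 gains by returning a sliver of
   bandwidth to the macro cells. *)

Lemma derivable_pt_lim_left_max f c d lo :
  derivable_pt_lim f c d -> lo < c -> (forall x, lo < x < c -> f x <= f c) -> 0 <= d.
Proof.
  intros Hd Hlo Hmax. apply Rnot_lt_le; intro Hneg.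
  destruct (Hd (- d / 2)) as [del Hdel]; [lra|].
  pose proof (cond_pos del) as Hdel0.
  set (h := - Rmin (del / 2) ((c - lo) / 2)).
  assert (Hh : - del / 2 <= h < 0 /\ lo < c + h).
  { unfold h; pose proof (Rmin_l (del / 2) ((c - lo) / 2));
    pose proof (Rmin_r (del / 2) ((c - lo) / 2));
    pose proof (Rmin_glb_lt (del / 2) ((c - lo) / 2) 0); lra. }
  assert (Habs : Rabs h < del) by (rewrite Rabs_left; lra).
  specialize (Hdel h ltac:(lra) Habs).
  apply Rabs_def2 in Hdel.
  assert (Hq : 0 <= (f (c + h) - f c) / h).
  { pose proof (Hmax (c + h) ltac:(lra)).
    apply Rmult_le_reg_r with (- h); [lra|].
    replace ((f (c + h) - f c) / h * - h) with (f c - f (c + h)) by (field; lra). lra. }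
  lra.
Qed.

Lemma derivable_pt_lim_right_max f c d hi :
  derivable_pt_lim f c d -> c < hi -> (forall x, c < x < hi -> f x <= f c) -> d <= 0.
Proof.
  intros Hd Hhi Hmax.
  assert (Hopp : derivable_pt_lim (fun x => f (- x)) (- c) (- d)).
  { replace (- d) with (d * -1) by ring.
    apply (derivable_pt_lim_comp Ropp f).
    - apply derivable_pt_lim_opp, derivable_pt_lim_id.
    - now rewrite Ropp_involutive. }
  enough (0 <= - d) by lra.
  apply (derivable_pt_lim_left_max _ _ _ (- hi) Hopp); [lra|].
  intros x Hx. rewrite Ropp_involutive. apply Hmax; lra.
Qed.

Lemma Rpower_1_base a : Rpower 1 a = 1.
Proof. unfold Rpower. now rewrite ln_1, Rmult_0_r, exp_0. Qed.

Lemma Rpower_neg_exceeds a L d :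
  0 < a -> 0 < L -> 0 < d -> exists u, 0 < u < d /\ L < Rpower u (- a).
Proof.
  intros Ha HL Hd.
  set (w := Rpower L (- / a)).
  assert (Hw : 0 < w) by apply exp_pos.
  assert (Hwa : Rpower w a = / L).
  { unfold w. rewrite Rpower_mult.
    replace (- / a * a) with (- (1)) by (field; lra).
    now rewrite Rpower_Ropp, Rpower_1. }
  set (u := Rmin (d / 2) (w / 2)).
  assert (Hu : 0 < u /\ u < d /\ u < w).
  { unfold u; pose proof (Rmin_l (d / 2) (w / 2)); pose proof (Rmin_r (d / 2) (w / 2));
    pose proof (Rmin_glb_lt (d / 2) (w / 2) 0); lra. }
  exists u. split; [lra|].
  assert (Hua : Rpower u a < / L) by (rewrite <- Hwa; apply Rlt_Rpower_l; lra).
  rewrite Rpower_Ropp, <- (Rinv_inv L).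
  apply Rinv_lt_contravar; [|easy].
  apply Rmult_lt_0_compat; [apply exp_pos | now apply Rinv_0_lt_compat].
Qed.

Definition small_price (alpha R0 Nf lamS X : R) : R :=
  lamS * Rpower (lamS * X * R0 / Nf) (- alpha).

Definition macro_price (alpha R0 Nm Y : R) : R := Rpower (Y * R0 / Nm) (- alpha).

(* The free equilibrium is exactly where the two unit prices agree. *)
Lemma small_price_ratio alpha R0 Nm Nf lamS X Y :
  0 < alpha -> 0 < R0 -> 0 < Nm -> 0 < Nf -> 0 < lamS -> 0 < X -> 0 < Y ->
  small_price alpha R0 Nf lamS X =
  macro_price alpha R0 Nm Y * Rpower (eps_of alpha lamS * Nf * Y / (X * Nm)) alpha.
Proof.
  intros Ha HR0 HNm HNf Hlam HX HY.
  unfold small_price, macro_price, eps_of, Rpower.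
  rewrite <- (exp_ln lamS) at 1 by lra.
  rewrite <- !exp_plus. f_equal.
  unfold Rdiv.
  repeat rewrite ln_mult;
    repeat (apply Rmult_lt_0_compat || apply Rinv_0_lt_compat || apply exp_pos || lra).
  rewrite !ln_Rinv, ?ln_exp, ln_mult by nra.
  field. lra.
Qed.

Lemma small_price_lt_macro_price alpha R0 Nm Nf lamS X Y :
  0 < alpha -> 0 < R0 -> 0 < Nm -> 0 < Nf -> 0 < lamS -> 0 < X -> 0 < Y ->
  eps_of alpha lamS * Nf * Y < X * Nm ->
  small_price alpha R0 Nf lamS X < macro_price alpha R0 Nm Y.
Proof.
  intros Ha HR0 HNm HNf Hlam HX HY Hlt.
  assert (Heps : 0 < eps_of alpha lamS) by apply exp_pos.
  rewrite (small_price_ratio alpha R0 Nm Nf lamS X Y) by easy.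
  assert (Hp : 0 < macro_price alpha R0 Nm Y) by apply exp_pos.
  assert (Hr : Rpower (eps_of alpha lamS * Nf * Y / (X * Nm)) alpha < 1).
  { rewrite <- (Rpower_1_base alpha). apply Rlt_Rpower_l; [easy|]. split.
    - apply Rdiv_lt_0_compat; repeat apply Rmult_lt_0_compat; lra.
    - apply Rmult_lt_reg_r with (X * Nm); [nra|].
      unfold Rdiv. rewrite Rmult_assoc, Rinv_l; nra. }
  nra.
Qed.

Lemma small_price_antitone alpha R0 Nf lamS X X' :
  0 < alpha -> 0 < R0 -> 0 < Nf -> 0 < lamS -> 0 < X -> X <= X' ->
  small_price alpha R0 Nf lamS X' <= small_price alpha R0 Nf lamS X.
Proof.
  intros Ha HR0 HNf Hlam HX HXX'.
  unfold small_price. apply Rmult_le_compat_l; [lra|].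
  rewrite !Rpower_Ropp. apply Rinv_le_contravar; [apply exp_pos|].
  apply Rle_Rpower_l; [lra|]. split.
  - apply Rdiv_lt_0_compat; [|lra]. repeat apply Rmult_lt_0_compat; lra.
  - apply Rmult_le_compat_r; [left; now apply Rinv_0_lt_compat|].
    apply Rmult_le_compat_r; [lra|]. apply Rmult_le_compat_l; lra.
Qed.

Definition own_revenue (alpha R0 Nm Nf lamS Bi Btot o x : R) : R :=
  R0 * ((Bi - x) * macro_price alpha R0 Nm (Btot - o - x)
        + x * small_price alpha R0 Nf lamS (o + x)).

Definition marginal (alpha q p Bi x X Y : R) : R :=
  q * (X - alpha * x) * Y - p * (Y - alpha * (Bi - x)) * X.

Definition own_marginal (alpha R0 Nm Nf lamS Bi Btot o x : R) : R :=
  marginal alpha (small_price alpha R0 Nf lamS (o + x))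
    (macro_price alpha R0 Nm (Btot - o - x)) Bi x (o + x) (Btot - o - x).

Lemma own_revenue_derivative alpha R0 Nm Nf lamS Bi Btot o x :
  0 < R0 -> 0 < Nm -> 0 < Nf -> 0 < lamS -> 0 < o + x -> 0 < Btot - o - x ->
  derivable_pt_lim (own_revenue alpha R0 Nm Nf lamS Bi Btot o) x
    (R0 / ((o + x) * (Btot - o - x)) * own_marginal alpha R0 Nm Nf lamS Bi Btot o x).
Proof.
  intros HR0 HNm HNf Hlam HX HY.
  apply is_derive_Reals.
  unfold own_revenue, own_marginal, marginal, small_price, macro_price, Rpower.
  auto_derive.
  - split; [|split; [|easy]]; repeat apply Rmult_lt_0_compat;
      try apply Rinv_0_lt_compat; nra.
  - replace ((Btot - o + - x) * R0 * / Nm) with ((Btot - o - x) * R0 / Nm) by (field; lra).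
    replace (lamS * (o + x) * R0 * / Nf) with (lamS * (o + x) * R0 / Nf) by (field; lra).
    field. lra.
Qed.

Lemma own_revenue_marginal_sign alpha R0 Nm Nf lamS Bi Btot o x lo hi :
  0 < R0 -> 0 < Nm -> 0 < Nf -> 0 < lamS -> 0 < o + x -> 0 < Btot - o - x ->
  lo <= x <= hi ->
  (forall y, lo <= y <= hi ->
     own_revenue alpha R0 Nm Nf lamS Bi Btot o y <= own_revenue alpha R0 Nm Nf lamS Bi Btot o x) ->
  (lo < x -> 0 <= own_marginal alpha R0 Nm Nf lamS Bi Btot o x) /\
  (x < hi -> own_marginal alpha R0 Nm Nf lamS Bi Btot o x <= 0).
Proof.
  intros HR0 HNm HNf Hlam HX HY Hx Hmax.
  pose proof (own_revenue_derivative alpha R0 Nm Nf lamS Bi Btot o x HR0 HNm HNf Hlam HX HY)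
    as Hd.
  assert (Hk : 0 < R0 / ((o + x) * (Btot - o - x)))
    by (apply Rdiv_lt_0_compat; [|apply Rmult_lt_0_compat]; lra).
  split; intro Hstrict.
  - apply Rmult_le_reg_l with (R0 / ((o + x) * (Btot - o - x))); [easy|].
    rewrite Rmult_0_r. apply (derivable_pt_lim_left_max _ _ _ lo Hd Hstrict).
    intros y Hy. apply Hmax. lra.
  - apply Rmult_le_reg_l with (R0 / ((o + x) * (Btot - o - x))); [easy|].
    rewrite Rmult_0_r. apply (derivable_pt_lim_right_max _ _ _ hi Hd Hstrict).
    intros y Hy. apply Hmax. lra.
Qed.

Lemma own_revenue_improvable_at_full alpha R0 Nm Nf lamS Bi o lo :
  0 < alpha -> 0 < R0 -> 0 < Nm -> 0 < Nf -> 0 < lamS -> 0 <= o -> 0 <= lo < Bi ->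
  exists y, lo < y < Bi /\
    own_revenue alpha R0 Nm Nf lamS Bi (o + Bi) o Bi
    < own_revenue alpha R0 Nm Nf lamS Bi (o + Bi) o y.
Proof.
  intros Ha HR0 HNm HNf Hlam Ho Hlo.
  set (q0 := small_price alpha R0 Nf lamS (o + Bi)).
  assert (Hq0 : 0 < q0) by (apply Rmult_lt_0_compat; [lra | apply exp_pos]).
  destruct (Rpower_neg_exceeds alpha q0 ((Bi - lo) * R0 / Nm)) as [u [Hu Hgain]];
    [lra | easy | apply Rdiv_lt_0_compat; nra |].
  set (t := u * Nm / R0).
  assert (Ht : 0 < t < Bi - lo).
  { unfold t; split; [apply Rdiv_lt_0_compat; nra|].
    apply Rmult_lt_reg_r with (R0 / Nm); [apply Rdiv_lt_0_compat; lra|].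
    replace (u * Nm / R0 * (R0 / Nm)) with u by (field; lra). lra. }
  exists (Bi - t). split; [lra|].
  unfold own_revenue, macro_price.
  replace ((o + Bi - o - (Bi - t)) * R0 / Nm) with u by (unfold t; field; lra).
  replace (Bi - (Bi - t)) with t by ring.
  fold q0.
  assert (Hsmall : q0 <= small_price alpha R0 Nf lamS (o + (Bi - t)))
    by (apply small_price_antitone; lra).
  replace (Bi - Bi) with 0 by ring.
  apply Rmult_lt_compat_l; [easy|].
  assert (t * q0 < t * Rpower u (- alpha)) by (apply Rmult_lt_compat_l; lra).
  assert ((Bi - t) * q0 <= (Bi - t) * small_price alpha R0 Nf lamS (o + (Bi - t)))
    by (apply Rmult_le_compat_l; lra).
  lra.
Qed.

Lemma rev_term_nonneg alpha R0 lam B r : 0 <= B ->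
  rev_term alpha R0 lam B r = R0 * lam * B * Rpower r (- alpha).
Proof.
  intros HB. unfold rev_term.
  destruct (Rle_dec B 0); [replace B with 0 by lra; ring | easy].
Qed.

Lemma S1_own_revenue alpha Nm Nf R0 lamS B1 B2 x b2 : 0 <= x <= B1 ->
  S1 alpha Nm Nf R0 lamS B1 B2 x b2 = own_revenue alpha R0 Nm Nf lamS B1 (B1 + B2) b2 x.
Proof.
  intros Hx. unfold S1, payoff, own_revenue, rate_M, rate_S, small_price, macro_price.
  rewrite !rev_term_nonneg by lra.
  replace (B1 - x + (B2 - b2)) with (B1 + B2 - b2 - x) by ring.
  replace (x + b2) with (b2 + x) by ring.
  ring.
Qed.

Lemma S2_own_revenue alpha Nm Nf R0 lamS B1 B2 b1 x : 0 <= x <= B2 ->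
  S2 alpha Nm Nf R0 lamS B1 B2 b1 x = own_revenue alpha R0 Nm Nf lamS B2 (B1 + B2) b1 x.
Proof.
  intros Hx. unfold S2, payoff, own_revenue, rate_M, rate_S, small_price, macro_price.
  rewrite !rev_term_nonneg by lra.
  replace (B1 - b1 + (B2 - x)) with (B1 + B2 - b1 - x) by ring.
  ring.
Qed.

Lemma marginal_split alpha q p Bi x X Y :
  marginal alpha q p Bi x X Y =
  (q - p) * (X - alpha * x) * Y + p * alpha * (Bi * X - x * (X + Y)).
Proof. unfold marginal; ring. Qed.

Lemma first_order_conditions_infeasible a q p E Nm B1 B2 B10 b1 b2 X Y :
  0 < a < 1 -> 0 < p -> 0 < E -> 0 < Nm -> 0 < B1 -> 0 < B2 -> 0 <= b1 -> 0 <= b2 ->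
  X = b1 + b2 -> Y = B1 + B2 - X -> 0 < X -> 0 < Y ->
  (E * Y < X * Nm -> q < p) ->
  B10 * (E + Nm) <= E * B1 -> E * B2 < b2 * (E + Nm) ->
  0 <= marginal a q p B2 b2 X Y ->
  (B10 < b1 -> 0 <= marginal a q p B1 b1 X Y) ->
  (b1 < B1 -> marginal a q p B1 b1 X Y <= 0) ->
  False.
Proof.
  intros Ha Hp HE HNm HB1 HB2 Hb1 Hb2 HX HY HX0 HY0 Hprice Hfree1 Hfree2 FOC2 FOC1lo FOC1hi.
  (* X / (X + Y) is a weighted mean of the shares b1 / B1 and b2 / B2. *)
  assert (Hshares : b1 * (X + Y) - B1 * X = B2 * X - b2 * (X + Y)) by (subst; ring).
  rewrite marginal_split in FOC2, FOC1lo, FOC1hi.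
  destruct (Rlt_or_le p q) as [Hpq|Hqp].
  - assert (Hs : X * Nm <= E * Y).
    { apply Rnot_lt_le; intro Hlt; specialize (Hprice Hlt); lra. }
    assert (Hb2share : B2 * X < b2 * (X + Y)).
    { apply Rmult_lt_reg_r with (E + Nm); nra. }
    assert (Hb1lt : b1 < B1) by nra.
    specialize (FOC1hi Hb1lt).
    assert (0 < (q - p) * (X - a * b1) * Y) by (repeat apply Rmult_lt_0_compat; nra).
    assert (0 < p * a * (B1 * X - b1 * (X + Y))) by (repeat apply Rmult_lt_0_compat; nra).
    lra.
  - assert (Hb2share : b2 * (X + Y) <= B2 * X).
    { assert (0 <= (p - q) * (X - a * b2) * Y)
        by (apply Rmult_le_pos; [apply Rmult_le_pos|]; nra).
      assert (0 <= p * a * (B2 * X - b2 * (X + Y))) by lra.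
      assert (0 < p * a) by nra.
      apply Rnot_lt_le; intro; nra. }
    assert (Hs : E * Y < X * Nm).
    { apply Rmult_lt_reg_l with B2; [lra|]. nra. }
    specialize (Hprice Hs).
    assert (Hb1gt : B10 < b1).
    { apply Rmult_lt_reg_r with ((X + Y) * (E + Nm)); nra. }
    specialize (FOC1lo Hb1gt).
    assert (Hsum : (q - p) * (X - a * b1) * Y + p * a * (B1 * X - b1 * (X + Y))
                   + ((q - p) * (X - a * b2) * Y + p * a * (B2 * X - b2 * (X + Y)))
                   = (q - p) * ((2 - a) * X * Y)) by (subst; ring).
    assert (0 < (p - q) * ((2 - a) * X * Y)) by (repeat apply Rmult_lt_0_compat; lra).
    lra.
Qed.

Lemma le_B_free alpha Nm Nf lamS Bi B : 0 < Nm -> 0 < Nf ->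
  B <= B_free alpha Nm Nf lamS Bi ->
  B * (eps_of alpha lamS * Nf + Nm) <= eps_of alpha lamS * Nf * Bi.
Proof.
  intros HNm HNf HB.
  assert (HEN : 0 < eps_of alpha lamS * Nf + Nm)
    by (pose proof (exp_pos ((1 / alpha - 1) * ln lamS)); unfold eps_of, Rpower; nra).
  apply (Rmult_le_compat_r (eps_of alpha lamS * Nf + Nm)) in HB; [|lra].
  unfold B_free in HB.
  replace (eps_of alpha lamS * Nf * Bi / (eps_of alpha lamS * Nf + Nm)
           * (eps_of alpha lamS * Nf + Nm)) with (eps_of alpha lamS * Nf * Bi) in HB
    by (field; lra).
  exact HB.
Qed.

Lemma B_free_lt alpha Nm Nf lamS Bi B : 0 < Nm -> 0 < Nf ->
  B_free alpha Nm Nf lamS Bi < B ->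
  eps_of alpha lamS * Nf * Bi < B * (eps_of alpha lamS * Nf + Nm).
Proof.
  intros HNm HNf HB.
  assert (HEN : 0 < eps_of alpha lamS * Nf + Nm)
    by (pose proof (exp_pos ((1 / alpha - 1) * ln lamS)); unfold eps_of, Rpower; nra).
  apply (Rmult_lt_compat_r (eps_of alpha lamS * Nf + Nm)) in HB; [|lra].
  unfold B_free in HB.
  replace (eps_of alpha lamS * Nf * Bi / (eps_of alpha lamS * Nf + Nm)
           * (eps_of alpha lamS * Nf + Nm)) with (eps_of alpha lamS * Nf * Bi) in HB
    by (field; lra).
  exact HB.
Qed.

Lemma is_NE_own_revenue alpha Nm Nf R0 lamS B1 B2 B10 B20 b1 b2 :
  0 <= B10 -> 0 <= B20 -> is_NE alpha Nm Nf R0 lamS B1 B2 B10 B20 b1 b2 ->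
  (forall y, B10 <= y <= B1 ->
     own_revenue alpha R0 Nm Nf lamS B1 (B1 + B2) b2 y
     <= own_revenue alpha R0 Nm Nf lamS B1 (B1 + B2) b2 b1) /\
  (forall y, B20 <= y <= B2 ->
     own_revenue alpha R0 Nm Nf lamS B2 (B1 + B2) b1 y
     <= own_revenue alpha R0 Nm Nf lamS B2 (B1 + B2) b1 b2).
Proof.
  intros HB10 HB20 [Hb1 [Hb2 [BR1 BR2]]].
  split; intros y Hy.
  - rewrite <- !S1_own_revenue by lra. now apply BR1.
  - rewrite <- !S2_own_revenue by lra. now apply BR2.
Qed.

Lemma best_responses_infeasible_above_floor alpha Nm Nf R0 lamS B1 B2 B10 B20 b1 b2 :
  0 < alpha < 1 -> 0 < Nm -> 0 < Nf -> 0 < R0 -> 0 < lamS -> 0 < B1 -> 0 < B2 ->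
  0 <= B10 -> B10 <= b1 <= B1 -> 0 <= B20 -> B20 < b2 <= B2 -> b1 + b2 < B1 + B2 ->
  B10 * (eps_of alpha lamS * Nf + Nm) <= eps_of alpha lamS * Nf * B1 ->
  eps_of alpha lamS * Nf * B2 < b2 * (eps_of alpha lamS * Nf + Nm) ->
  (forall y, B10 <= y <= B1 ->
     own_revenue alpha R0 Nm Nf lamS B1 (B1 + B2) b2 y
     <= own_revenue alpha R0 Nm Nf lamS B1 (B1 + B2) b2 b1) ->
  (forall y, B20 <= y <= B2 ->
     own_revenue alpha R0 Nm Nf lamS B2 (B1 + B2) b1 y
     <= own_revenue alpha R0 Nm Nf lamS B2 (B1 + B2) b1 b2) ->
  False.
Proof.
  intros Ha HNm HNf HR0 Hlam HB1 HB2 HB10 Hb1 HB20 Hb2 Hslack Hfree1 Hfree2 BR1 BR2.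
  destruct (own_revenue_marginal_sign alpha R0 Nm Nf lamS B2 (B1 + B2) b1 b2 B20 B2)
    as [FOC2 _]; try lra; try exact BR2.
  destruct (own_revenue_marginal_sign alpha R0 Nm Nf lamS B1 (B1 + B2) b2 b1 B10 B1)
    as [FOC1lo FOC1hi]; try lra; try exact BR1.
  unfold own_marginal in FOC2, FOC1lo, FOC1hi.
  rewrite (Rplus_comm b2 b1) in FOC1lo, FOC1hi.
  replace (B1 + B2 - b2 - b1) with (B1 + B2 - b1 - b2) in FOC1lo, FOC1hi by ring.
  assert (Heps : 0 < eps_of alpha lamS) by apply exp_pos.
  apply (first_order_conditions_infeasible alpha
    (small_price alpha R0 Nf lamS (b1 + b2)) (macro_price alpha R0 Nm (B1 + B2 - b1 - b2))
    (eps_of alpha lamS * Nf) Nm B1 B2 B10 b1 b2 (b1 + b2) (B1 + B2 - b1 - b2)); try lra.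
  - apply exp_pos.
  - nra.
  - intro Hs. apply small_price_lt_macro_price; lra.
Qed.

Theorem proposition2 (alpha Nm Nf R0 lamS B1 B2 B10 B20 b1 b2 : R) :
  0 < alpha < 1 -> 0 < Nm -> 0 < Nf -> 0 < R0 -> 1 < lamS ->
  0 < B1 -> 0 < B2 -> 0 <= B10 <= B1 -> 0 <= B20 <= B2 ->
  B10 <= B_free alpha Nm Nf lamS B1 ->
  B_free alpha Nm Nf lamS B2 < B20 ->
  is_NE alpha Nm Nf R0 lamS B1 B2 B10 B20 b1 b2 ->
  b2 = B20 /\ (b1 = B10 \/ B10 < b1).
Proof.
  intros Ha HNm HNf HR0 Hlam HB1 HB2 HB10 HB20 Hfree1 Hfree2 HNE.
  destruct (is_NE_own_revenue alpha Nm Nf R0 lamS B1 B2 B10 B20 b1 b2) as [BR1 BR2];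
    try easy; try lra.
  destruct HNE as [Hb1 [Hb2 _]].
  split; [| destruct (Rle_lt_or_eq_dec _ _ (proj1 Hb1)); auto].
  apply Rle_antisym; [apply Rnot_lt_le; intro Hlt | lra].
  destruct (Rle_lt_or_eq_dec (b1 + b2) (B1 + B2) ltac:(lra)) as [Hslack | Hfull].
  - apply (best_responses_infeasible_above_floor alpha Nm Nf R0 lamS B1 B2 B10 B20 b1 b2);
      try easy; try lra.
    + now apply le_B_free.
    + apply B_free_lt; lra.
  - replace b1 with B1 in BR2 by lra. replace b2 with B2 in BR2 by lra.
    destruct (own_revenue_improvable_at_full alpha R0 Nm Nf lamS B2 B1 B20)
      as [y [Hy Hgain]]; try lra.
    specialize (BR2 y ltac:(lra)). lra.
Qed.
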